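(* Let $(\Omega,\mathcal{F},\mathbb{P})$ be a probability space with a right-continuous filtration. Let $V^*$ be a strictly positive process (the num\'eraire portfolio) such that, for every $T>0$, the benchmarked zero-coupon bond price $\hat P(t,T):=P(t,T)/V^*_t$, $t\in[0,T]$, is a local martingale, where $P(t,T)>0$ denotes the continuous price of a zero-coupon bond with maturity $T$. Let $\Delta$ be a finite set of tenors $\delta>0$. For $T>0$, $\delta\in\Delta$, $R\in\mathbb{R}$, let $\Pi(t;T,\delta,R)$, $t\in[0,T]$, be the continuous value process of a single-period swap paying $\delta(L(T,T+\delta)-R)$ at $T+\delta$, and assume $\Pi(t;T,\delta,R)=\delta\bigl(L_t(T,T+\delta)-R\bigr)P(t,T+\delta)$, where the forward term rate $L_t(T,T+\delta)$ is the rate $R$ with $\Pi(t;T,\delta,R)=0$. Suppose that $(\Pi(t;T,\delta,R)/V^*_t)_{t\in[0,T]}$ is a local martingale for all $T>0$, $R\in\mathbb{R}$, $\delta\in\Delta$. Define the multiplicative forward spread \[ S_t(T,T+\delta):=\frac{1+\delta L_t(T,T+\delta)}{1+\delta F_t(T,T+\delta)},\qquad F_t(T,T+\delta):=\frac{1}{\delta}\Bigl(\frac{P(t,T)}{P(t,T+\delta)}-1\Bigr). \] Then, for all $T>0$ and $\delta\in\Delta$, the process $S_t(T,T+\delta)\hat P(t,T)$, $t\in[0,T]$, is a local martingale.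
   Context: $L(T,T+\delta)$ denotes the spot term rate for the period $[T,T+\delta]$ and $L_T(T,T+\delta)=L(T,T+\delta)$. *)

From HB Require Import structures.
From mathcomp Require Import all_boot all_order all_algebra.
From mathcomp Require Import all_classical all_reals all_analysis.
Set Implicit Arguments. Unset Strict Implicit. Unset Printing Implicit Defensive.
Import Order.TTheory GRing.Theory Num.Theory numFieldNormedType.Exports.
Local Open Scope classical_set_scope.
Local Open Scope ring_scope.

Section StochDefs.
Context {d : measure_display} {Omega : measurableType d} {R : realType}.

Definition filtration (F : R -> set (set Omega)) : Prop :=
  [/\ (forall t, 0 <= t -> sigma_algebra setT (F t)),
      (forall t, 0 <= t -> F t `<=` measurable) &
      (forall s t, 0 <= s -> s <= t -> F s `<=` F t)].

Definition right_continuous_filtration (F : R -> set (set Omega)) : Prop :=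
  forall t, 0 <= t -> F t = [set A | forall u, t < u -> F u A].

Definition adapted_on (F : R -> set (set Omega)) (Th : R)
    (X : R -> Omega -> R) : Prop :=
  forall t, 0 <= t <= Th ->
    forall B : set R, measurable B -> F t (X t @^-1` B).

(* Martingale on [0, Th]: adapted, integrable, and
   E[X_t 1_A] = E[X_s 1_A] for all 0 <= s <= t <= Th and A in F_s
   (i.e. E[X_t | F_s] = X_s a.s.). *)
Definition martingale_on (P : probability Omega R) (F : R -> set (set Omega))
    (Th : R) (X : R -> Omega -> R) : Prop :=
  [/\ adapted_on F Th X,
      (forall t, 0 <= t <= Th -> P.-integrable setT (fun w => (X t w)%:E)) &
      (forall s t, 0 <= s -> s <= t -> t <= Th -> forall A, F s A ->
         (\int[P]_(w in A) (X t w)%:E = \int[P]_(w in A) (X s w)%:E)%E)].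

Definition stopping_time (F : R -> set (set Omega)) (tau : Omega -> \bar R)
    : Prop :=
  (forall w, (0 <= tau w)%E) /\
  (forall t, 0 <= t -> F t [set w | (tau w <= t%:E)%E]).

Definition stopped (X : R -> Omega -> R) (tau : Omega -> \bar R) :
    R -> Omega -> R :=
  fun t w => if (tau w < t%:E)%E then X (fine (tau w)) w else X t w.

Definition local_martingale_on (P : probability Omega R)
    (F : R -> set (set Omega)) (Th : R) (X : R -> Omega -> R) : Prop :=
  exists tau : nat -> Omega -> \bar R,
    [/\ (forall n, stopping_time F (tau n)),
        (forall n w, (tau n w <= tau n.+1 w)%E),
        {ae P, forall w, (fun n => tau n w) @ \oo --> +oo%E} &
        (forall n, martingale_on P F Th (stopped X (tau n)))].

End StochDefs.

Definition fwd_rate {R : realType} (Pt_T Pt_Td delta : R) : R :=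
  (Pt_T / Pt_Td - 1) / delta.

Definition mult_spread {R : realType} (Lt Pt_T Pt_Td delta : R) : R :=
  (1 + delta * Lt) / (1 + delta * fwd_rate Pt_T Pt_Td delta).

(* With the strike K = -1/dl the swap pays dl (L - K) = 1 + dl L, so its value is
   (1 + dl L_t) P(t,T+dl).  Since 1 + dl F_t = P(t,T) / P(t,T+dl), this is exactly
   S_t P(t,T); hence S_t P^(t,T) is a benchmarked swap value, a local martingale
   by hypothesis. *)
From HB Require Import structures.
From mathcomp Require Import all_boot all_order all_algebra.
From mathcomp Require Import all_classical all_reals all_analysis.
From mathcomp Require Import ring.
Set Implicit Arguments. Unset Strict Implicit. Unset Printing Implicit Defensive.
Import Order.TTheory GRing.Theory Num.Theory numFieldNormedType.Exports.
Local Open Scope classical_set_scope.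
Local Open Scope ring_scope.

Section ProcessesEqualOnInterval.
Context {d : measure_display} {Omega : measurableType d} {R : realType}.
Variables (Th : R) (X Y : R -> Omega -> R).
Hypothesis eqXY : forall t w, 0 <= t <= Th -> X t w = Y t w.

Lemma eq_stopped_on (tau : Omega -> \bar R) :
  (forall w, (0 <= tau w)%E) ->
  forall t, 0 <= t <= Th -> stopped X tau t = stopped Y tau t.
Proof.
move=> tau_ge0 t /andP[t_ge0 t_le]; apply/funext => w; rewrite /stopped.
case: ifP => tau_lt; apply: eqXY; last by rewrite t_ge0.
move: (tau_ge0 w) tau_lt; case: (tau w) => [r| |] //=.
by rewrite lee_fin lte_fin => r_ge0 r_lt; rewrite r_ge0 (le_trans (ltW r_lt)).
Qed.

Lemma eq_martingale_on (P : probability Omega R) (F : R -> set (set Omega)) :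
  martingale_on P F Th X -> martingale_on P F Th Y.
Proof.
have eqXYt t : 0 <= t <= Th -> X t = Y t by move=> tT; apply/funext => w; exact: eqXY.
case=> adaptedX integrableX martX; split.
- by move=> t tT B mB; rewrite -eqXYt //; exact: adaptedX.
- by move=> t tT; rewrite -eqXYt //; exact: integrableX.
- move=> s t s_ge0 st tT A FsA.
  by rewrite -!eqXYt ?s_ge0 ?(le_trans s_ge0 st) ?(le_trans st tT) ?tT //; exact: martX.
Qed.

End ProcessesEqualOnInterval.

Lemma eq_local_martingale_on (d : measure_display) (Omega : measurableType d)
    (R : realType) (P : probability Omega R) (F : R -> set (set Omega)) (Th : R)
    (X Y : R -> Omega -> R) :
  (forall t w, 0 <= t <= Th -> X t w = Y t w) ->
  local_martingale_on P F Th X -> local_martingale_on P F Th Y.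
Proof.
move=> eqXY [tau [stop_tau tau_nd tau_oo mart_tau]]; exists tau; split=> // n.
apply: eq_martingale_on (mart_tau n) => t w tT.
by rewrite (eq_stopped_on eqXY (proj1 (stop_tau n))).
Qed.

Lemma mult_spreadE (R : realType) (Lt a b dl : R) :
  dl != 0 -> b != 0 -> mult_spread Lt a b dl = (1 + dl * Lt) * b / a.
Proof.
move=> dl_neq0 b_neq0; rewrite /mult_spread /fwd_rate.
have -> : 1 + dl * ((a / b - 1) / dl) = a / b.
  by field; rewrite b_neq0 dl_neq0.
by rewrite invf_div mulrA.
Qed.

Lemma swap_value_at_strike_Ninv (R : realType) (dl Lt : R) :
  dl != 0 -> dl * (Lt - - dl^-1) = 1 + dl * Lt.
Proof. by move=> dl_neq0; field. Qed.

(* Pb t T w      = P(t,T)(w), zero-coupon bond price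
   V t w         = V*_t(w), numeraire portfolio
   L t T dl w    = L_t(T,T+dl)(w), forward term rate
   Pi t T dl K w = Pi(t;T,dl,K)(w), single-period swap value *)
Theorem corollary2p13 (d : measure_display) (Omega : measurableType d)
  (R : realType) (P : probability Omega R) (F : R -> set (set Omega))
  (V : R -> Omega -> R) (Pb : R -> R -> Omega -> R)
  (Delta : set R) (L : R -> R -> R -> Omega -> R)
  (Pi : R -> R -> R -> R -> Omega -> R) :
  filtration F ->
  right_continuous_filtration F ->
  (forall t w, 0 <= t -> 0 < V t w) ->
  (forall t T w, 0 <= t <= T -> 0 < Pb t T w) ->
  (forall (T : R) w, 0 < T -> {within `[0, T], continuous (fun t : R => Pb t T w)}) ->
  (forall T, 0 < T ->
     local_martingale_on P F T (fun t w => Pb t T w / V t w)) ->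
  finite_set Delta ->
  (forall dl, Delta dl -> 0 < dl) ->
  (forall (T dl K : R) w, 0 < T -> Delta dl ->
     {within `[0, T], continuous (fun t : R => Pi t T dl K w)}) ->
  (forall t T dl K w, 0 < T -> Delta dl -> 0 <= t <= T ->
     Pi t T dl K w = dl * (L t T dl w - K) * Pb t (T + dl) w) ->
  (forall T K dl, 0 < T -> Delta dl ->
     local_martingale_on P F T (fun t w => Pi t T dl K w / V t w)) ->
  forall T dl, 0 < T -> Delta dl ->
    local_martingale_on P F T
      (fun t w => mult_spread (L t T dl w) (Pb t T w) (Pb t (T + dl) w) dl
                  * (Pb t T w / V t w)).
Proof.
move=> _ _ _ Pb_gt0 _ _ _ Delta_gt0 _ PiE Pi_lmart T dl T_gt0 Delta_dl.
apply: (eq_local_martingale_on _ (Pi_lmart T (- dl^-1) dl T_gt0 Delta_dl)).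
move=> t w tT; have [t_ge0 t_le] := andP tT.
have dl_gt0 := Delta_gt0 dl Delta_dl.
have PbT_gt0 : 0 < Pb t T w by exact: Pb_gt0.
have PbTdl_gt0 : 0 < Pb t (T + dl) w.
  by apply: Pb_gt0; rewrite t_ge0 (le_trans t_le) // lerDl ltW.
rewrite PiE // swap_value_at_strike_Ninv ?gt_eqF // mult_spreadE ?gt_eqF //.
by rewrite mulrA divfK ?gt_eqF.
Qed.
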